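(* Assume $\operatorname{rk}L=2$ and $\omega$ non-degenerate. Let $u\in L$ be primitive and let $W,W'\in\mathcal Q[L^*]$ be Laurent polynomials with $W=\mu_u^*(W')$. Then $W\in\mathbb Z[L^*]$ if and only if $W'\in\mathbb Z[L^*]$.
   Context: $L$ is a lattice with skew-symmetric integral bilinear form $\omega$, $L^*=\mathrm{Hom}(L,\mathbb Z)$, $(\cdot,\cdot)$ the canonical pairing. $\mathcal Q=\mathbb Q(e^{2\pi i\mathbb Q})$ is $\mathbb Q$ with all roots of unity adjoined; $\mathcal Q[L^*]$ (resp. $\mathbb Z[L^*]$) is the group algebra of $L^*$ over $\mathcal Q$ (resp. $\mathbb Z$) with monomials $X^m$, and $\mathbb K_L$ is the fraction field of $\mathcal Q[L^*]$. For $v\in L$, $\mu_v^*$ is the $\mathcal Q$-algebra automorphism of $\mathbb K_L$ with $\mu_v^*(X^m)=X^m(1+X^{\omega(\cdot,v)})^{-(m,v)}$, where $\omega(\cdot,v)\in L^*$ is $w\mapsto\omega(w,v)$. A vector is primitive if nonzero and not a multiple $kw$, $k>1$. *)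

From HB Require Import structures.
From mathcomp Require Import all_boot all_order all_algebra all_field.
Set Implicit Arguments. Unset Strict Implicit. Unset Printing Implicit Defensive.
Import Order.TTheory GRing.Theory Num.Theory.
Local Open Scope ring_scope.

(* The lattice L (rank 2) is identified with Z^2 = int * int, and its dual
   L^* = Hom(L,Z) with Z^2 via values on the standard basis; the canonical
   pairing (m, v) is then the dot product. *)
Definition pairing (m v : int * int) : int := m.1 * v.1 + m.2 * v.2.
Definition ladd (v w : int * int) : int * int := (v.1 + w.1, v.2 + w.2).
Definition lscale (k : int) (v : int * int) : int * int := (k * v.1, k * v.2).

Definition primitive (u : int * int) : Prop :=
  u <> (0, 0) /\ forall (k : int) (w : int * int), 1 < k -> u <> lscale k w.

(* The field Q = Q(e^{2 pi i Q}) as the subfield of algC generated over Q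
   by all roots of unity: x lies in Q(zeta_n) for some n > 0. *)
Definition in_cyclo (x : algC) : Prop :=
  exists (n : nat) (z : algC) (p : {poly rat}),
    (0 < n)%N /\ n.-primitive_root z /\ x = (map_poly ratr p).[z].

(* The fraction field K_L (we take the fraction field of C-bar[x1,x2] with
   C-bar = algebraic complex numbers, which contains Frac(Q[L^*])). *)
Definition KL := {fraction {poly {poly algC}}}.
Definition toK (p : {poly {poly algC}}) : KL := @FracField.tofrac _ p.
Definition cst (c : algC) : KL := toK (c%:P%:P).
Definition x1 : KL := toK 'X.
Definition x2 : KL := toK ((('X : {poly algC}))%:P).

Definition mono (m : int * int) : KL := x1 ^ m.1 * x2 ^ m.2.

Definition laur (s : seq ((int * int) * algC)) : KL :=
  \sum_(t <- s) cst t.2 * mono t.1.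

Definition coeffs_cyclo (s : seq ((int * int) * algC)) : Prop :=
  forall t, t \in s -> in_cyclo t.2.

Definition in_ZL (f : KL) : Prop :=
  exists t : seq ((int * int) * int),
    f = \sum_(p <- t) (p.2)%:~R * mono p.1.

Definition omega_dual (omega : int * int -> int * int -> int) (v : int * int)
  : int * int := (omega (1, 0) v, omega (0, 1) v).

Definition mu_mono (omega : int * int -> int * int -> int) (v m : int * int)
  : KL := mono m * (1 + mono (omega_dual omega v)) ^ (- pairing m v).

(* mu_v^* applied to a Laurent polynomial (Q-algebra automorphism, hence
   determined by its values on monomials and Q-linearity) *)
Definition mu (omega : int * int -> int * int -> int) (v : int * int)
  (s : seq ((int * int) * algC)) : KL :=
  \sum_(t <- s) cst t.2 * mu_mono omega v t.1.

From HB Require Import structures.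
From mathcomp Require Import all_boot all_order all_algebra all_field.
From mathcomp Require Import zify ring.
Import Order.TTheory GRing.Theory Num.Theory.
Set Implicit Arguments. Unset Strict Implicit. Unset Printing Implicit Defensive.
Local Open Scope ring_scope.

(* Put a := omega(., u) in L^*.  Skewness gives (a, u) =
   omega(u, u) = 0, and non-degeneracy together with u <> 0 gives a <> 0.
   Choose N >= (m, u) for every exponent m of W'; multiplying the identity
   W = mu_u^*(W') by (1 + X^a)^N clears its denominators.  Multiplication by
   1 + X^a preserves the grading of L^* by j = (m, u) because (a, u) = 0, so
   in every degree j the identity reads
        W_j (1 + X^a)^N = W'_j (1 + X^a)^(N - j).
   The theorem then follows from: for a <> 0, a Laurent polynomial has
   coefficients in an additive subgroup S iff its product with 1 + X^a has.
   The nontrivial direction is an induction along the linear form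
   m |-> (m, a), which increases by (a, a) > 0 under m |-> m + a. *)

Definition lsub (m a : int * int) : int * int := (m.1 - a.1, m.2 - a.2).

Lemma ladd_eq_lsub (m a n : int * int) : (ladd m a == n) = (m == lsub n a).
Proof.
case: m a n => [m1 m2] [a1 a2] [n1 n2]; rewrite /ladd /lsub /= !xpair_eqE.
by congr (_ && _); apply/eqP/eqP; lia.
Qed.

Lemma pairing_ladd (m n v : int * int) :
  pairing (ladd m n) v = pairing m v + pairing n v.
Proof. rewrite /pairing /ladd /=; ring. Qed.

Lemma pairing_lsub (m n v : int * int) :
  pairing (lsub m n) v = pairing m v - pairing n v.
Proof. rewrite /pairing /lsub /=; ring. Qed.

Lemma pairingC (m v : int * int) : pairing m v = pairing v m.
Proof. rewrite /pairing; ring. Qed.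

Lemma pairing_self_gt0 (a : int * int) : a != (0, 0) -> 0 < pairing a a.
Proof. case: a => a1 a2; rewrite xpair_eqE negb_and /pairing /= => /orP[]; nia. Qed.

Lemma exists_bound (T : eqType) (f : T -> int) (s : seq T) :
  exists N : nat, forall t, t \in s -> f t <= N%:Z.
Proof.
elim: s => [|x s [N HN]]; first by exists 0%N.
by exists (maxn N (absz (f x))) => t; rewrite inE => /predU1P[-> | /HN]; lia.
Qed.

(* A finite list of pairs (exponent, coefficient) represents the Laurent
   polynomial in which equal exponents are collected; [coef s m] is its
   coefficient at m. *)
Section CoefficientLists.

Variable V : zmodType.
Implicit Types (s : seq ((int * int) * V)) (a m u : int * int).

Definition coef s m : V := \sum_(t <- s) (if t.1 == m then t.2 else 0).

Definition coefs_in (S : {pred V}) s : Prop := forall m, coef s m \in S.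

Lemma coef_nil m : coef [::] m = 0.
Proof. by rewrite /coef big_nil. Qed.

Lemma coef_cons t s m :
  coef (t :: s) m = (if t.1 == m then t.2 else 0) + coef s m.
Proof. by rewrite /coef big_cons. Qed.

Lemma coef_cat s1 s2 m : coef (s1 ++ s2) m = coef s1 m + coef s2 m.
Proof. by rewrite /coef big_cat. Qed.

Lemma coef_notin s m : (forall t, t \in s -> t.1 != m) -> coef s m = 0.
Proof.
by move=> Hs; rewrite /coef big_seq big1 // => t /Hs /negbTE ->.
Qed.

Fixpoint mul1pX a s :=
  if s is t :: s' then t :: (ladd t.1 a, t.2) :: mul1pX a s' else [::].

Definition mul1pXn a k s := iter k (mul1pX a) s.

Lemma coef_mul1pX a s m : coef (mul1pX a s) m = coef s m + coef s (lsub m a).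
Proof.
elim: s => [|t s IH] /=; first by rewrite !coef_nil addr0.
by rewrite !coef_cons IH /= ladd_eq_lsub addrA addrACA.
Qed.

Lemma mul1pXn_nil a k : mul1pXn a k [::] = [::].
Proof. by elim: k => //= k ->. Qed.

Lemma mul1pX_cat a s1 s2 : mul1pX a (s1 ++ s2) = mul1pX a s1 ++ mul1pX a s2.
Proof. by elim: s1 => //= t s ->. Qed.

Lemma mul1pXn_cat a k s1 s2 :
  mul1pXn a k (s1 ++ s2) = mul1pXn a k s1 ++ mul1pXn a k s2.
Proof. by elim: k => //= k ->; rewrite mul1pX_cat. Qed.

Definition graded u (j : int) s := [seq t <- s | pairing t.1 u == j].

Lemma coef_graded u j s m :
  coef (graded u j s) m = if pairing m u == j then coef s m else 0.
Proof.
elim: s => [|t s IH] /=; first by rewrite coef_nil if_same.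
case: ifP => ht; rewrite !coef_cons IH //;
  by case: (t.1 =P m) => [<-|_]; rewrite ?ht ?add0r.
Qed.

Lemma graded_cat u j s1 s2 :
  graded u j (s1 ++ s2) = graded u j s1 ++ graded u j s2.
Proof. exact: filter_cat. Qed.

Lemma graded_mul1pX u a j s : pairing a u = 0 ->
  graded u j (mul1pX a s) = mul1pX a (graded u j s).
Proof.
move=> au0; elim: s => //= t s IH.
rewrite /graded /= pairing_ladd au0 addr0.
by case: (pairing t.1 u == j); rewrite /= -IH.
Qed.

Lemma graded_mul1pXn u a j k s : pairing a u = 0 ->
  graded u j (mul1pXn a k s) = mul1pXn a k (graded u j s).
Proof. by move=> au0; elim: k => //= k IH; rewrite graded_mul1pX // IH. Qed.

Section ClosedCoefficients.

Variable S : zmodClosed V.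

Lemma coefs_in_graded u s :
  coefs_in S s <-> forall j, coefs_in S (graded u j s).
Proof.
split=> [Hs j m | Hs m]; first by rewrite coef_graded; case: ifP; rewrite ?rpred0.
by have := Hs (pairing m u) m; rewrite coef_graded eqxx.
Qed.

Lemma coefs_in_ext s1 s2 :
  coef s1 =1 coef s2 -> coefs_in S s1 <-> coefs_in S s2.
Proof. by move=> E; split=> H m; [rewrite -E | rewrite E]. Qed.

Lemma coefs_in_mul1pX a s : coefs_in S s -> coefs_in S (mul1pX a s).
Proof. by move=> Hs m; rewrite coef_mul1pX rpredD. Qed.

(* If (m, a) is below
   every (n, a) with n an exponent of s, then coef s m = 0; otherwise
   coef s m = coef (mul1pX a s) m - coef s (m - a), where (m - a, a) is
   smaller than (m, a) by (a, a) > 0. *)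
Lemma coefs_in_mul1pX_inv a s :
  a != (0, 0) -> coefs_in S (mul1pX a s) -> coefs_in S s.
Proof.
move=> a_nz Hmul.
have aa_gt0 := pairing_self_gt0 a_nz.
have [N HN] := exists_bound (fun t : (int * int) * V => - pairing t.1 a) s.
have coef_low m : pairing m a + N%:Z < 0 -> coef s m = 0.
  move=> low; apply: coef_notin => t /HN ht; apply/eqP => tm.
  by move: ht low; rewrite /= tm; lia.
suff below k m : pairing m a + N%:Z < k%:Z -> coef s m \in S.
  by move=> m; apply: (below (absz (pairing m a + N%:Z)).+1); lia.
elim: k m => [|k IH] m hm; first by rewrite coef_low ?rpred0.
have [low | _] := ltrP (pairing m a + N%:Z) 0; first by rewrite coef_low ?rpred0.
have -> : coef s m = coef (mul1pX a s) m - coef s (lsub m a).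
  by rewrite coef_mul1pX addrK.
by rewrite rpredB ?Hmul // IH // pairing_lsub; lia.
Qed.

Lemma coefs_in_mul1pXn a k s :
  a != (0, 0) -> coefs_in S (mul1pXn a k s) <-> coefs_in S s.
Proof.
move=> a_nz; elim: k => //= k <-.
by split; [apply: coefs_in_mul1pX_inv | apply: coefs_in_mul1pX].
Qed.

Lemma coefs_in_graded_transfer u a (k k' : int -> nat) s s' :
  a != (0, 0) ->
  (forall j, coef (mul1pXn a (k j) (graded u j s)) =1
             coef (mul1pXn a (k' j) (graded u j s'))) ->
  coefs_in S s <-> coefs_in S s'.
Proof.
move=> a_nz E; rewrite (coefs_in_graded u s) (coefs_in_graded u s').
split=> H j.
  by rewrite -(coefs_in_mul1pXn (k' j) _ a_nz) -(coefs_in_ext (E j)) coefs_in_mul1pXn.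
by rewrite -(coefs_in_mul1pXn (k j) _ a_nz) (coefs_in_ext (E j)) coefs_in_mul1pXn.
Qed.

End ClosedCoefficients.

End CoefficientLists.

Lemma x1_unit : x1 \is a GRing.unit.
Proof. by rewrite unitfE /x1 /toK tofrac_eq0 polyX_eq0. Qed.

Lemma x2_unit : x2 \is a GRing.unit.
Proof. by rewrite unitfE /x2 /toK tofrac_eq0 polyC_eq0 polyX_eq0. Qed.

Lemma mono0 : mono (0, 0) = 1.
Proof. by rewrite /mono /= !expr0z mulr1. Qed.

Lemma mono_add m n : mono (ladd m n) = mono m * mono n.
Proof. by rewrite /mono /ladd /= (exprzDr x1_unit) (exprzDr x2_unit); ring. Qed.

Lemma cst1 : cst 1 = 1.
Proof. by rewrite /cst /toK !rmorph1. Qed.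

Lemma cstN c : cst (- c) = - cst c.
Proof. by rewrite /cst /toK !rmorphN. Qed.

Lemma cst_int (z : int) : cst z%:~R = z%:~R.
Proof. by rewrite /cst /toK !rmorph_int. Qed.

Lemma laur_nil : laur [::] = 0.
Proof. by rewrite /laur big_nil. Qed.

Lemma laur_cons t s : laur (t :: s) = cst t.2 * mono t.1 + laur s.
Proof. by rewrite /laur big_cons. Qed.

Lemma laur_cat s1 s2 : laur (s1 ++ s2) = laur s1 + laur s2.
Proof. by rewrite /laur big_cat. Qed.

Lemma laur_mul1pX a s : laur (mul1pX a s) = laur s * (1 + mono a).
Proof.
elim: s => [|t s IH] /=; first by rewrite laur_nil mul0r.
by rewrite !laur_cons IH /= mono_add; ring.
Qed.

Lemma laur_mul1pXn a k s : laur (mul1pXn a k s) = laur s * (1 + mono a) ^+ k.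
Proof. by elim: k => [|k IH] /=; rewrite ?expr0 ?mulr1 // laur_mul1pX IH exprS; ring. Qed.

Definition cleared_term (N : nat) (t : (int * int) * algC) : {poly {poly algC}} :=
  (t.2%:P * 'X^(absz (t.1.2 + N%:Z)))%:P * 'X^(absz (t.1.1 + N%:Z)).

Lemma toK_cleared_term N t : 0 <= t.1.1 + N%:Z -> 0 <= t.1.2 + N%:Z ->
  toK (cleared_term N t) = cst t.2 * mono t.1 * (x1 ^+ N * x2 ^+ N).
Proof.
move=> h1 h2; rewrite /cleared_term /toK /cst /mono polyCM !tofracM.
have -> : tofrac ('X^(absz (t.1.1 + N%:Z)) : {poly {poly algC}}) = x1 ^ t.1.1 * x1 ^+ N.
  by rewrite rmorphXn /= !exprnP -(exprzDr x1_unit) gez0_abs.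
have -> : tofrac (('X^(absz (t.1.2 + N%:Z)))%:P : {poly {poly algC}}) = x2 ^ t.1.2 * x2 ^+ N.
  by rewrite !rmorphXn /= !exprnP -(exprzDr x2_unit) gez0_abs.
rewrite /x1 /x2 /toK; ring.
Qed.

Lemma coef_bimonomial (R : nzRingType) (c : R) (i j i' j' : nat) :
  ((c%:P * 'X^j)%:P * 'X^i)`_i'`_j' = if (i == i') && (j == j') then c else 0.
Proof.
rewrite coefMXn coefC; case: (ltngtP i' i) => [_|gt|<-] /=; first exact: coef0.
  by rewrite subn_eq0 leqNgt gt coef0.
rewrite subnn /= coefMXn coefC; case: (ltngtP j' j) => [_|gt|<-] //=.
  by rewrite subn_eq0 leqNgt gt.
by rewrite subnn.
Qed.

(* Multiply by a large power of x1 x2 and read off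
   the coefficients of the resulting bivariate polynomial. *)
Lemma laur_eq0 s m : laur s = 0 -> coef s m = 0.
Proof.
move=> s0.
have [N HN] := exists_bound (fun t : (int * int) * algC => (absz t.1.1 + absz t.1.2)%:Z) s.
pose P := \sum_(t <- s) cleared_term N t.
have toK_P : toK P = laur s * (x1 ^+ N * x2 ^+ N).
  rewrite /laur big_distrl /P /toK rmorph_sum /=.
  by apply: eq_big_seq => -[[t1 t2] c] /HN /= ht; apply: toK_cleared_term => /=; lia.
have P0 : P = 0.
  by apply/eqP; rewrite -(tofrac_eq0 (R := {poly {poly algC}})) -/(toK P) toK_P s0 mul0r.
case: m => m1 m2.
have [m_low | m_high] := boolP ((m1 + N%:Z < 0) || (m2 + N%:Z < 0)).
  apply: coef_notin => -[[t1 t2] c] /HN /= ht.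
  by apply: contraTneq m_low => -[<- <-]; lia.
have := congr1 (fun p : {poly {poly algC}} => p`_(absz (m1 + N%:Z))`_(absz (m2 + N%:Z))) P0.
rewrite /= !coef0 /P !coef_sum /coef => P0_coef; apply: etrans P0_coef.
apply: eq_big_seq => -[[t1 t2] c] /HN /= ht; rewrite coef_bimonomial /= xpair_eqE.
by congr (if _ then _ else _); congr (_ && _); apply/eqP/eqP; lia.
Qed.

Lemma laur_inj_coef s1 s2 : laur s1 = laur s2 -> coef s1 =1 coef s2.
Proof.
pose opp (s : seq ((int * int) * algC)) := [seq (t.1, - t.2) | t <- s].
have laur_opp s : laur (opp s) = - laur s.
  by elim: s => [|t s IH]; rewrite /= ?laur_nil ?oppr0 // !laur_cons IH cstN opprD mulNr.
have coef_opp s m : coef (opp s) m = - coef s m.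
  elim: s => [|t s IH]; rewrite /= ?coef_nil ?oppr0 // !coef_cons IH opprD.
  by case: ifP; rewrite ?oppr0.
move=> E m; apply/eqP; rewrite -subr_eq0 -coef_opp -coef_cat; apply/eqP/laur_eq0.
by rewrite laur_cat laur_opp E subrr.
Qed.

Lemma laur_collect s :
  laur s = \sum_(m <- undup (map fst s)) cst (coef s m) * mono m.
Proof.
apply/esym; under eq_bigr => m _ do rewrite /coef /cst /toK !rmorph_sum mulr_suml.
rewrite exchange_big /=; apply: eq_big_seq => t ts.
rewrite (bigD1_seq t.1) ?undup_uniq ?mem_undup ?map_f //= eqxx big1 ?addr0 // => m tm.
by rewrite eq_sym (negbTE tm) !rmorph0 mul0r.
Qed.

Lemma in_ZL_coefs s : in_ZL (laur s) <-> coefs_in Num.int s.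
Proof.
split=> [[z Hz] | s_int].
  pose sz := [seq (p.1, (p.2%:~R : algC)) | p <- z].
  have laur_sz : laur s = laur sz.
    by rewrite Hz /laur big_map; apply: eq_bigr => p _; rewrite cst_int.
  move=> m; rewrite (laur_inj_coef laur_sz) /coef big_map rpred_sum // => p _.
  by case: ifP; rewrite ?intr_int ?rpred0.
exists [seq (m, Num.floor (coef s m)) | m <- undup (map fst s)].
by rewrite laur_collect big_map; apply: eq_bigr => m _; rewrite -cst_int floorK.
Qed.

(* 1 + X^a is invertible in K_L for a <> 0: by independence of the monomials
   X^0 and X^a it is not 0. *)
Lemma one_plus_mono_unit a : a != (0, 0) -> (1 + mono a) \is a GRing.unit.
Proof.
move=> a_nz; rewrite unitfE; apply/eqP => sum0.
have := @laur_eq0 [:: ((0, 0), 1); (a, 1)] (0, 0).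
rewrite !laur_cons laur_nil /= cst1 !mul1r mono0 addr0 => /(_ sum0).
by rewrite !coef_cons coef_nil /= (negbTE a_nz) !addr0 => /eqP; rewrite oner_eq0.
Qed.

Fixpoint mu_cleared (a u : int * int) (N : nat) (s : seq ((int * int) * algC)) :=
  if s is t :: s' then
    mul1pXn a (absz (N%:Z - pairing t.1 u)) [:: t] ++ mu_cleared a u N s'
  else [::].

Lemma laur_mu_cleared omega u N s :
  let a := omega_dual omega u in
  (1 + mono a) \is a GRing.unit ->
  (forall t, t \in s -> pairing t.1 u <= N%:Z) ->
  laur (mu_cleared a u N s) = mu omega u s * (1 + mono a) ^+ N.
Proof.
move=> a a_unit; elim: s => [|t s IH] Hs /=.
  by rewrite laur_nil /mu big_nil mul0r.
rewrite laur_cat laur_mul1pXn IH => [|t' t's]; last by apply: Hs; rewrite inE t's orbT.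
rewrite /mu big_cons mulrDl laur_cons laur_nil addr0 /mu_mono -/a; congr (_ + _).
rewrite !exprnP -!mulrA -(exprzDr a_unit) gez0_abs ?subr_ge0 ?Hs ?mem_head //.
by rewrite [- _ + _]addrC.
Qed.

Lemma graded_mu_cleared a u N j s : pairing a u = 0 ->
  graded u j (mu_cleared a u N s) = mul1pXn a (absz (N%:Z - j)) (graded u j s).
Proof.
move=> au0; elim: s => [|t s IH] /=; first by rewrite mul1pXn_nil.
rewrite graded_cat graded_mul1pXn // IH /graded /=.
by case: eqP => [-> | _]; rewrite ?mul1pXn_nil // -mul1pXn_cat.
Qed.

Lemma additive_int_linear (h : int -> int) :
  {morph h : x y / x + y} -> forall x, h x = x * h 1.
Proof.
move=> hD.
have h0 : h 0 = 0 by have := hD 0 0; rewrite addr0; lia.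
have hn (n : nat) : h n = n%:Z * h 1.
  by elim: n => [|n IH]; rewrite ?h0 ?mul0r // -addn1 PoszD hD IH mulrDl mul1r.
case=> n; first exact: hn.
by have := hD (Negz n) n.+1; rewrite NegzE addNr h0 hn; lia.
Qed.

Lemma omega_pairing (omega : int * int -> int * int -> int) :
  (forall v v' w, omega (ladd v v') w = omega v w + omega v' w) ->
  forall u v, omega v u = pairing v (omega_dual omega u).
Proof.
move=> omega_addl u [x y].
have lin1 z : omega (z, 0) u = z * omega (1, 0) u.
  apply: (additive_int_linear (h := fun z => omega (z, 0) u)) => p q /=.
  by rewrite -omega_addl /ladd /= addr0.
have lin2 z : omega (0, z) u = z * omega (0, 1) u.
  apply: (additive_int_linear (h := fun z => omega (0, z) u)) => p q /=.
  by rewrite -omega_addl /ladd /= addr0.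
by rewrite /pairing /omega_dual /= -lin1 -lin2 -omega_addl /ladd /= addr0 add0r.
Qed.

Theorem mainTheorem11
  (omega : int * int -> int * int -> int)
  (omega_addl : forall v v' w, omega (ladd v v') w = omega v w + omega v' w)
  (omega_addr : forall v w w', omega v (ladd w w') = omega v w + omega v w')
  (omega_skew : forall v w, omega v w = - omega w v)
  (omega_nondeg : forall v, (forall w, omega v w = 0) -> v = (0, 0))
  (u : int * int) (u_prim : primitive u)
  (W W' : seq ((int * int) * algC))
  (HW : coeffs_cyclo W) (HW' : coeffs_cyclo W')
  (Hmu : laur W = mu omega u W') :
  in_ZL (laur W) <-> in_ZL (laur W').
Proof.
pose a := omega_dual omega u.
have omega_a v : omega v u = pairing v a := omega_pairing omega_addl u v.
have au0 : pairing a u = 0.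
  by have := omega_skew u u; rewrite omega_a pairingC; lia.
have a_nz : a != (0, 0).
  apply/eqP => a0; case: u_prim => u_nz _; apply/u_nz/omega_nondeg => w.
  by rewrite omega_skew omega_a a0 /pairing /= !mulr0 addr0 oppr0.
have [N HN] := exists_bound (fun t : (int * int) * algC => pairing t.1 u) W'.
have cleared : laur (mul1pXn a N W) = laur (mu_cleared a u N W').
  by rewrite laur_mul1pXn Hmu laur_mu_cleared // one_plus_mono_unit.
have degree_j j : coef (mul1pXn a N (graded u j W)) =1
                  coef (mul1pXn a (absz (N%:Z - j)) (graded u j W')).
  move=> m; rewrite -graded_mul1pXn // -graded_mu_cleared //.
  by rewrite !coef_graded (laur_inj_coef cleared).
by rewrite !in_ZL_coefs; apply: coefs_in_graded_transfer degree_j.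
Qed.
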